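(* Let $m,d\geq1$ and let $\mathcal{A}\in\mathbb{T}_{2m,d}$ be Einstein-symmetric. If Z-eigenvalues of $\mathcal{A}$ exist, then $\lambda^E_{\max}(\mathcal{A})\geq\lambda^Z_{\max}(\mathcal{A})$.
   Context: $\mathbb{T}_{2m,d}$ is the set of real tensors $\mathcal{A}=(a_{i_1\ldots i_{2m}})$ of order $2m$ with every index in $\{1,\ldots,d\}$. The Einstein product of $\mathcal{A},\mathcal{B}\in\mathbb{T}_{2m,d}$ is $(\mathcal{A}*\mathcal{B})_{i_1\ldots i_mj_1\ldots j_m}=\sum_{k_1,\ldots,k_m}a_{i_1\ldots i_mk_1\ldots k_m}b_{k_1\ldots k_mj_1\ldots j_m}$. Transpose: $(\mathcal{A}^\top)_{i_1\ldots i_mj_1\ldots j_m}=a_{j_1\ldots j_mi_1\ldots i_m}$; Einstein-symmetric means $\mathcal{A}^\top=\mathcal{A}$. Diagonal means $a_{i_1\ldots i_mj_1\ldots j_m}=0$ unless $i_k=j_k$ for all $k$; $\mathcal{I}^E$ is diagonal with all entries $a_{i_1\ldots i_mi_1\ldots i_m}=1$; $\mathcal{U}$ is Einstein-orthogonal if $\mathcal{U}^\top*\mathcal{U}=\mathcal{I}^E$. An Einstein-symmetric $\mathcal{A}$ has a decomposition $\mathcal{A}=\mathcal{U}*\mathcal{D}*\mathcal{U}^\top$ with $\mathcal{U}$ Einstein-orthogonal and $\mathcal{D}$ Einstein-symmetric diagonal; the diagonal entries $d_{i_1\ldots i_mi_1\ldots i_m}$ of $\mathcal{D}$ are the Einstein-eigenvalues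 of $\mathcal{A}$ (equivalently, the eigenvalues of the $d^m\times d^m$ matrix $f(\mathcal{A})_{ij}=a_{i_1\ldots i_mj_1\ldots j_m}$, $i=i_1+\sum_{k=2}^m(i_k-1)d^{k-1}$, $j$ likewise), and $\lambda^E_{\max}(\mathcal{A})$ is the largest of them. A real $\lambda$ is a Z-eigenvalue of $\mathcal{A}$ if there is $x\in\mathbb{R}^d$ with $x^\top x=1$ and $\mathcal{A}x^{2m-1}=\lambda x$, where $(\mathcal{A}x^{2m-1})_i=\sum_{i_2,\ldots,i_{2m}}a_{ii_2\ldots i_{2m}}x_{i_2}\cdots x_{i_{2m}}$; $\lambda^Z_{\max}(\mathcal{A})$ is the largest Z-eigenvalue. *)

From HB Require Import structures.
From mathcomp Require Import all_boot all_order all_algebra.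
Set Implicit Arguments. Unset Strict Implicit. Unset Printing Implicit Defensive.
Import Order.TTheory GRing.Theory Num.Theory.
Local Open Scope ring_scope.

(* A multi-index (i_1,...,i_m) with each i_k in {1..d} (here 'I_d = {0..d-1}). *)
Definition midx (m d : nat) := {ffun 'I_m -> 'I_d}.

(* A tensor of order 2m in T_{2m,d}: entry a_{i_1..i_m j_1..j_m} = A I J
   with I = (i_1..i_m), J = (j_1..j_m). *)
Definition tensor (R : Type) (m d : nat) := midx m d -> midx m d -> R.

Section Tensors.
Variables (R : rcfType) (m d : nat).

Definition eprod (A B : tensor R m d) : tensor R m d :=
  fun I J => \sum_(K : midx m d) A I K * B K J.

Definition etr (A : tensor R m d) : tensor R m d := fun I J => A J I.

Definition Esym (A : tensor R m d) : Prop := forall I J, etr A I J = A I J.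

Definition Ediag (A : tensor R m d) : Prop := forall I J, I != J -> A I J = 0.

Definition idE : tensor R m d := fun I J => (I == J)%:R.

Definition Eorth (U : tensor R m d) : Prop :=
  forall I J, eprod (etr U) U I J = idE I J.

Definition Eeig (A : tensor R m d) (lam : R) : Prop :=
  exists U D : tensor R m d,
    [/\ Eorth U, Esym D, Ediag D,
        (forall I J, A I J = eprod (eprod U D) (etr U) I J)
      & exists I, D I I = lam].

(* (A x^{2m-1})_i = sum_{i_2..i_{2m}} a_{i i_2 .. i_{2m}} x_{i_2} ... x_{i_{2m}},
   where the first index is i_1 = I (Ordinal hm) (needs m >= 1). *)
Definition Zapply (hm : (0 < m)%N) (A : tensor R m d) (x : 'I_d -> R) (i : 'I_d) : R :=
  \sum_(I : midx m d | I (Ordinal hm) == i) \sum_(J : midx m d)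
     A I J * (\prod_(k : 'I_m | k != Ordinal hm) x (I k)) * (\prod_(k : 'I_m) x (J k)).

Definition Zeig (hm : (0 < m)%N) (A : tensor R m d) (lam : R) : Prop :=
  exists x : 'I_d -> R,
    \sum_(i : 'I_d) x i ^+ 2 = 1 /\ forall i, Zapply hm A x i = lam * x i.

End Tensors.

(* Flatten A to the real symmetric matrix M = f(A) of size d^m and diagonalise
   it as M = U diag(D) U^T with U orthogonal; read back as tensors this is an
   Einstein decomposition of A, so every entry of D is an Einstein-eigenvalue.
   If x is a unit Z-eigenvector for mu, then X = x^{(x)m} is a unit vector with
   X^T M X = x^T (A x^{2m-1}) = mu, and this Rayleigh quotient is at most
   max D.  The orthogonal diagonalisation is obtained by deflation with
   Householder reflections, a real eigenvalue being supplied by the Hermitian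
   complexification of M. *)

From HB Require Import structures.
From mathcomp Require Import all_boot all_order all_algebra.
Import Order.TTheory GRing.Theory Num.Theory.
Set Implicit Arguments.
Unset Strict Implicit.
Unset Printing Implicit Defensive.
Local Open Scope ring_scope.
From mathcomp Require Import complex ring.

Local Notation "''[' u , v ]" := (\tr (u *m v^T)).

Section DotProduct.
Variables (R : comPzRingType) (n : nat).
Implicit Types u v w : 'rV[R]_n.

Lemma dotmxC u v : '[u, v] = '[v, u].
Proof. by rewrite -mxtrace_tr trmx_mul trmxK. Qed.

Lemma dotmxBl u v w : '[u - v, w] = '[u, w] - '[v, w].
Proof. by rewrite mulmxBl raddfB. Qed.

Lemma dotmxBr u v w : '[u, v - w] = '[u, v] - '[u, w].
Proof. by rewrite [LHS]dotmxC dotmxBl !(dotmxC u). Qed.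

Lemma mulmx_row_trmx u v m (A : 'M[R]_(1, m)) : u *m v^T *m A = '[u, v] *: A.
Proof. by rewrite [u *m v^T in LHS]mx11_scalar mul_scalar_mx trace_mx11. Qed.

End DotProduct.

Section RealDotProduct.
Variables (R : realDomainType) (n : nat).
Implicit Types v X : 'rV[R]_n.

Lemma sqnormmx_gt0 v : (0 < '[v, v]) = (v != 0).
Proof.
have -> : '[v, v] = \sum_j v 0 j ^+ 2.
  by rewrite trace_mx11 mxE; apply: eq_bigr => j _; rewrite !mxE expr2.
have [->|v_neq0] := eqVneq v 0; first by rewrite big1 ?ltxx // => j _; rewrite mxE expr0n.
have [j vj_neq0] : exists j, v 0 j != 0.
  apply/existsP; apply: contraNT v_neq0; rewrite negb_exists => /forallP v0.
  by apply/eqP/rowP => j; rewrite mxE; apply/eqP/negPn/v0.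
have sq_ge0 i : true -> 0 <= v 0 i ^+ 2 by rewrite sqr_ge0.
rewrite lt_def psumr_neq0 // sumr_ge0 // andbT.
by apply/hasP; exists j; rewrite ?mem_index_enum //= lt_def sqrf_eq0 vj_neq0 sqr_ge0.
Qed.

Lemma rayleigh_spectral_le (U : 'M[R]_n) (D : 'rV[R]_n) X c :
  U^T *m U = 1%:M -> (forall k, D 0 k <= c) ->
  '[X *m (U *m diag_mx D *m U^T), X] <= c * '[X, X].
Proof.
move=> U_orth D_le; set Y := X *m U.
have -> : '[X, X] = '[Y, Y] by rewrite trmx_mul mulmxA -(mulmxA X) (mulmx1C U_orth) mulmx1.
have -> : '[X *m (U *m diag_mx D *m U^T), X] = '[Y *m diag_mx D, Y].
  by rewrite trmx_mul !mulmxA.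
clearbody Y; rewrite !trace_mx11 !mxE mulr_sumr; apply: ler_sum => k _.
by rewrite mul_mx_diag !mxE mulrAC mulrC ler_wpM2r // -expr2 sqr_ge0.
Qed.

End RealDotProduct.

Section Reflection.
Variables (R : realFieldType) (n : nat).
Implicit Types u v w : 'rV[R]_n.

Definition reflmx w : 'M[R]_n := 1%:M - (2 / '[w, w]) *: (w^T *m w).

Lemma reflmx_sym w : (reflmx w)^T = reflmx w.
Proof. by rewrite raddfB /= trmx1 linearZ /= trmx_mul trmxK. Qed.

Lemma reflmx_orthogonal w : w != 0 -> (reflmx w)^T *m reflmx w = 1%:M.
Proof.
rewrite -sqnormmx_gt0 reflmx_sym /reflmx => w_gt0.
set k := 2 / '[w, w]; set X := w^T *m w.
have XX : X *m X = '[w, w] *: X.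
  by rewrite /X -mulmxA (mulmxA w) mulmx_row_trmx -scalemxAr.
have kk : k * k * '[w, w] = k + k by rewrite /k; field; exact: lt0r_neq0.
rewrite mulmxBl !mulmxBr !mul1mx mulmx1 -scalemxAr -scalemxAl XX !scalerA kk.
by rewrite scalerDl opprB addrK subrK.
Qed.

Lemma reflmx_swap u v : '[u, u] = '[v, v] -> u != v -> u *m reflmx (u - v) = v.
Proof.
move=> uv u_neq_v; set w := u - v.
have w_gt0 : 0 < '[w, w] by rewrite sqnormmx_gt0 subr_eq0.
have uw : '[u, w] = '[w, w] / 2.
  by rewrite /w !dotmxBl !dotmxBr (dotmxC v u) uv; field.
rewrite /reflmx mulmxBr mulmx1 -scalemxAr mulmxA mulmx_row_trmx scalerA uw.
have -> : 2 / '[w, w] * ('[w, w] / 2) = 1 by field; exact: lt0r_neq0.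
by rewrite scale1r /w opprB addrC subrK.
Qed.

End Reflection.

Lemma orthomx_with_row0 (R : realFieldType) n (v : 'rV[R]_n.+1) :
  '[v, v] = 1 -> exists2 H : 'M[R]_n.+1, H^T *m H = 1%:M & row 0 H = v.
Proof.
move=> v1; have [<-|e_neq_v] := eqVneq 'e_0 v.
  by exists 1%:M; rewrite ?trmx1 ?mulmx1 // rowE mulmx1.
exists (reflmx ('e_0 - v)); first by rewrite reflmx_orthogonal // subr_eq0.
by rewrite rowE reflmx_swap // v1 trmx_delta mul_delta_mx trace_mx11 mxE !eqxx.
Qed.

Lemma symmetric_row0_block (R : pzRingType) n (B : 'M[R]_(1 + n)) (a : R) :
  B^T = B -> row 0 B = a *: 'e_0 -> B = block_mx a%:M 0 0 (drsubmx B).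
Proof.
move=> B_sym B_row0.
have B0 j : B 0 j = a *+ (j == 0).
  by move/rowP: B_row0 => /(_ j); rewrite !mxE eqxx /= mulr_natr eq_sym.
have lshift0 : lshift n (0 : 'I_1) = 0 by apply: val_inj.
rewrite -[B in LHS]submxK; congr block_mx; apply/matrixP => i j; rewrite !mxE.
- by rewrite (ord1 i) (ord1 j) lshift0 B0.
- by rewrite (ord1 i) lshift0 B0.
- by rewrite (ord1 j) -[B]B_sym mxE lshift0 B0.
Qed.

Section Spectral.
Variable R : rcfType.

Lemma symmetric_eigenvalue n (S : 'M[R]_n.+1) : S^T = S -> exists a, eigenvalue S a.
Proof.
move=> S_sym; pose Sc := map_mx (real_complex R) S.
have Sc_sym : Sc \is symmetricmx.
  by apply/is_hermitianmxP; rewrite expr0 scale1r map_mx_id // /Sc map_trmx S_sym.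
have Sc_real : Sc \is a realmx.
  by apply/mxOverP => i j; rewrite mxE; apply/complex_realP; eexists.
have Sc_herm := realsym_hermsym Sc_sym Sc_real.
have /orthomx_spectralP Sc_E := hermitian_normalmx Sc_herm.
set P := spectralmx Sc in Sc_E; set D := spectral_diag Sc in Sc_E.
have /complex_realP [a Da] := mxOverP (hermitian_spectral_diag_real Sc_herm) 0 0.
exists a; rewrite -(eigenvalue_map (real_complex R)) -[_ a]Da.
have P_unit : P \in unitmx := spectral_unit Sc.
apply/eigenvalueP; exists (row 0 P).
  rewrite -row_mul -/Sc -/D [in P *m _]Sc_E !mulmxA mulmxV // mul1mx row_mul row_diag_mx.
  by rewrite -scalemxAl -rowE.
rewrite rowE mulmx_free_eq0 ?row_free_unit //.
by apply/negP => /eqP/matrixP/(_ 0 0); rewrite !mxE eqxx => /eqP; rewrite oner_eq0.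
Qed.

Lemma symmetric_unit_eigenvector n (S : 'M[R]_n.+1) :
  S^T = S -> exists a, exists2 v : 'rV_n.+1, '[v, v] = 1 & v *m S = a *: v.
Proof.
move=> /symmetric_eigenvalue [a /eigenvalueP [v vS v_neq0]].
have v_gt0 : 0 < '[v, v] by rewrite sqnormmx_gt0.
exists a, ((Num.sqrt '[v, v])^-1 *: v); last by rewrite -scalemxAl vS !scalerA mulrC.
rewrite linearZ /= -scalemxAl -scalemxAr !linearZ /= mulrA -expr2 exprVn.
by rewrite sqr_sqrtr ?ltW // mulVf ?gt_eqF.
Qed.

Theorem symmetric_spectral n (S : 'M[R]_n) :
  S^T = S -> exists U : 'M[R]_n, exists D : 'rV[R]_n,
    U^T *m U = 1%:M /\ S = U *m diag_mx D *m U^T.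
Proof.
elim: n S => [|n IH] S S_sym.
  by exists 1%:M, 0; split; [rewrite trmx1 mulmx1 | apply/matrixP => -[]].
have [a [v v1 vS]] := symmetric_unit_eigenvector S_sym.
have [H H_orth H_row0] := orthomx_with_row0 v1.
have H_orth' : H *m H^T = 1%:M := mulmx1C H_orth.
pose B : 'M[R]_(1 + n) := H *m S *m H^T.
have S_E : S = H^T *m B *m H.
  by rewrite /B !mulmxA H_orth mul1mx -mulmxA H_orth mulmx1.
have B_sym : B^T = B by rewrite /B !trmx_mul trmxK S_sym mulmxA.
have B_row0 : row 0 B = a *: 'e_0.
  by rewrite /B !row_mul H_row0 vS -scalemxAl -H_row0 -row_mul H_orth' rowE mulmx1.
have [U' [D' [U'_orth B'_E]]] := IH _ (etrans (trmx_drsub B) (congr1 _ B_sym)).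
pose K : 'M[R]_(1 + n) := block_mx 1%:M 0 0 U'.
have K_orth : K^T *m K = 1%:M.
  rewrite tr_block_mx !trmx0 trmx1 mulmx_block !mulmx0 !mul0mx !mulmx1 !addr0 !add0r U'_orth.
  by rewrite -scalar_mx_block.
have B_E : B = K *m diag_mx (row_mx a%:M D') *m K^T.
  rewrite {1}(symmetric_row0_block B_sym B_row0) B'_E diag_mx_row tr_block_mx !trmx0 trmx1.
  have -> : diag_mx (a%:M : 'rV[R]_1) = a%:M by apply/matrixP => i j; rewrite !mxE (ord1 i) (ord1 j).
  by rewrite !mulmx_block !mulmx0 !mul0mx !mulmx1 !mul1mx !addr0 !add0r mul0mx.
exists (H^T *m K), (row_mx a%:M D'); split.
  by rewrite trmx_mul trmxK mulmxA -(mulmxA K^T) H_orth' mulmx1.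
by rewrite S_E B_E trmx_mul trmxK !mulmxA.
Qed.

End Spectral.

Section TensorMatrix.
Variables (R : rcfType) (m d : nat).
Local Notation T := (midx m d).
Implicit Types (A B : tensor R m d) (M N : 'M[R]_#|T|).

(* The unfolding f(A), with multi-indices ordered by enum_rank rather than
   lexicographically; the two matrices are permutation-similar. *)
Definition mx_of_tensor A : 'M[R]_#|T| := \matrix_(i, j) A (enum_val i) (enum_val j).

Definition tensor_of_mx M : tensor R m d := fun I J => M (enum_rank I) (enum_rank J).

Lemma mx_of_tensorK A : tensor_of_mx (mx_of_tensor A) =2 A.
Proof. by move=> I J; rewrite /tensor_of_mx mxE !enum_rankK. Qed.

Lemma mx_of_tensor_sym A : Esym A -> (mx_of_tensor A)^T = mx_of_tensor A.
Proof. by move=> A_sym; apply/matrixP => i j; rewrite !mxE -[in RHS]A_sym. Qed.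

Lemma etr_mx M : etr (tensor_of_mx M) =2 tensor_of_mx M^T.
Proof. by move=> I J; rewrite /etr /tensor_of_mx mxE. Qed.

Lemma eprod_mx M N : eprod (tensor_of_mx M) (tensor_of_mx N) =2 tensor_of_mx (M *m N).
Proof.
move=> I J; rewrite /eprod /tensor_of_mx mxE [RHS](reindex enum_rank) //.
exact/onW_bij/enum_rank_bij.
Qed.

Lemma eq_eprod A A' B B' : A =2 A' -> B =2 B' -> eprod A B =2 eprod A' B'.
Proof. by move=> eA eB I J; apply: eq_bigr => K _; rewrite eA eB. Qed.

Lemma idE_mx : @idE R m d =2 tensor_of_mx 1%:M.
Proof. by move=> I J; rewrite /idE /tensor_of_mx mxE (inj_eq enum_rank_inj). Qed.

Lemma Eeig_spectral A U (D : 'rV[R]_#|T|) :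
  U^T *m U = 1%:M -> mx_of_tensor A = U *m diag_mx D *m U^T -> forall k, Eeig A (D 0 k).
Proof.
move=> U_orth A_E k.
exists (tensor_of_mx U), (tensor_of_mx (diag_mx D)); split.
- by move=> I J; rewrite (eq_eprod (etr_mx U) (fun _ _ => erefl)) eprod_mx U_orth idE_mx.
- by move=> I J; rewrite etr_mx tr_diag_mx.
- by move=> I J I_neq_J; rewrite /tensor_of_mx mxE (inj_eq enum_rank_inj) (negbTE I_neq_J).
- move=> I J; rewrite -mx_of_tensorK A_E.
  by rewrite (eq_eprod (eprod_mx U (diag_mx D)) (etr_mx U)) eprod_mx.
- by exists (enum_val k); rewrite /tensor_of_mx enum_valK mxE eqxx.
Qed.

Definition tpow (x : 'I_d -> R) (I : T) : R := \prod_(t < m) x (I t).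

Lemma sum_tpow_sqr x : \sum_I tpow x I ^+ 2 = (\sum_i x i ^+ 2) ^+ m.
Proof.
have -> : (\sum_i x i ^+ 2) ^+ m = \prod_(t < m) \sum_i x i ^+ 2 by rewrite prodr_const card_ord.
by rewrite bigA_distr_bigA; apply: eq_bigr => I _; rewrite prodrXl.
Qed.

Lemma sum_mul_Zapply (hm : (0 < m)%N) A x :
  \sum_i x i * Zapply hm A x i = \sum_I \sum_J tpow x I * A I J * tpow x J.
Proof.
rewrite [RHS](partition_big (fun I : T => I (Ordinal hm)) xpredT) //=.
apply: eq_bigr => i _; rewrite mulr_sumr; apply: eq_big => [I | I /eqP <-] //.
rewrite mulr_sumr; apply: eq_bigr => J _.
by rewrite /tpow [\prod_(t < m) x (I t)](bigD1 (Ordinal hm)) //= !mulrA (mulrAC (x _)).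
Qed.

Definition row_of_fun (f : T -> R) : 'rV[R]_#|T| := \row_k f (enum_val k).

Lemma row_of_fun_dot f g : '[row_of_fun f, row_of_fun g] = \sum_I f I * g I.
Proof.
rewrite trace_mx11 mxE (reindex enum_rank) /=; last exact/onW_bij/enum_rank_bij.
by apply: eq_bigr => I _; rewrite !mxE enum_rankK.
Qed.

Lemma row_of_fun_mul f A :
  row_of_fun f *m mx_of_tensor A = row_of_fun (fun J => \sum_I f I * A I J).
Proof.
apply/rowP => j; rewrite !mxE (reindex enum_rank) /=; last exact/onW_bij/enum_rank_bij.
by apply: eq_bigr => I _; rewrite !mxE enum_rankK.
Qed.

End TensorMatrix.

Theorem lemma2p4 (R : rcfType) (m d : nat) (hm : (0 < m)%N) (hd : (0 < d)%N)
    (A : tensor R m d) :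
  Esym A ->
  (exists mu, Zeig hm A mu) ->
  forall mu : R, Zeig hm A mu -> exists lam : R, Eeig A lam /\ mu <= lam.
Proof.
move=> A_sym _ mu [x [x_unit x_eig]].
have [U [D [U_orth A_E]]] := symmetric_spectral (mx_of_tensor_sym A_sym).
have k0 : 'I_#|midx m d| := enum_rank [ffun=> Ordinal hd].
have [k _ D_max] := @arg_maxP _ _ _ k0 xpredT (fun k => D 0 k) isT.
exists (D 0 k); split; first exact: (Eeig_spectral U_orth A_E).
pose X : 'rV[R]_#|midx m d| := row_of_fun (tpow x).
have X_unit : '[X, X] = 1.
  rewrite row_of_fun_dot -[1](expr1n _ m) -x_unit -sum_tpow_sqr.
  by apply: eq_bigr => I _; rewrite expr2.
have X_mu : '[X *m mx_of_tensor A, X] = mu.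
  rewrite row_of_fun_mul row_of_fun_dot.
  transitivity (\sum_i x i * Zapply hm A x i).
    by rewrite sum_mul_Zapply exchange_big; apply: eq_bigr => J _; rewrite mulr_suml.
  rewrite -[RHS]mulr1 -x_unit mulr_sumr; apply: eq_bigr => i _.
  by rewrite x_eig mulrCA expr2.
rewrite -X_mu -[D 0 k]mulr1 -X_unit A_E.
by apply: rayleigh_spectral_le => // j; apply: D_max.
Qed.
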